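(* Let $\mathbf{Y}$ be a Euclidean space, let $M,Q\subset\mathbf{Y}$ be nonempty closed sets, and let $\bar y \in M\cap Q$. Suppose that $M$ intersects $Q$ separably at $\bar y$ and that $M$ is super-regular at $\bar y$. Let $\Phi$ be a faithful approximation of the projection onto $M$ around $\bar y$. Then for every starting point $z^0 \in M$ sufficiently close to $\bar y$, the approximate alternating projection iteration \[ z^{k+1} = \Phi(z^k, y^k)\quad\text{for any } y^k \in P_Q(z^k), \qquad k=0,1,2,\ldots \] converges linearly to a point in the intersection $M\cap Q$.
   Context: For a nonempty closed set $S\subset\mathbf{Y}$, $P_S(z)$ is the (possibly multivalued) set of nearest points of $S$ to $z$. The set $M$ intersects $Q$ separably at $\bar y\in M\cap Q$ if there exists an angle $\alpha>0$ such that for any point $z\in M\setminus Q$ sufficiently close to $\bar y$ and any points $x\in P_Q(z)\setminus M$ and $z'\in P_M(x)$, the angle between the vectors $z-x$ and $z'-x$ is at least $\alpha$. The set $M$ is super-regular at $\bar y$ if, given any angle $\gamma>0$, for any points $z\in M$ and $x\notin M$ sufficiently close to $\bar y$ and any point $z'\in P_M(x)$ with $z'\neq z$, the angle between $z-z'$ and $x-z'$ is at least $\frac{\pi}{2}-\gamma$. A faithful approximation of the projection onto $M$ around $\bar y$ is a map $\Phi\colon V\times\mathbf{Y}\to M$, where $V$ is a neighborhood of $\bar y$ in $M$, such that: given any $\epsilon>0$ and angle $\alpha>0$, if points $z\in M$ and $y\notin M$ are sufficiently close to $\bar y$, then any point $\hat z\in P_M(y)$ such that the angle between $z-y$ and $\hat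 z-y$ is at least $\alpha$ satisfies $|\hat z-\Phi(z,y)|\le\epsilon|y-z|$. A sequence $(z^k)$ converges linearly to $\hat z$ if there exist constants $c\in(0,1)$ and $\rho>0$ with $|z^k-\hat z|<\rho c^k$ for all $k$. *)

From mathcomp Require Import all_boot all_order all_algebra.
From mathcomp Require Import all_classical all_reals all_analysis.
Set Implicit Arguments. Unset Strict Implicit. Unset Printing Implicit Defensive.
Import Order.TTheory GRing.Theory Num.Theory.
Local Open Scope ring_scope.
Local Open Scope classical_set_scope.

Section Euclid.
Variables (R : realType) (n : nat).
Notation Y := 'rV[R]_n.

Definition dotp (u v : Y) : R := (u *m v^T) 0 0.
Definition enorm (u : Y) : R := Num.sqrt (dotp u u).

Definition angle (u v : Y) : R := acos (dotp u v / (enorm u * enorm v)).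

Definition eclosed (S : set Y) : Prop :=
  forall x, (forall e : R, 0 < e -> exists s, S s /\ enorm (x - s) < e) -> S x.

Definition nearest (S : set Y) (z : Y) : set Y :=
  [set x | S x /\ forall s, S s -> enorm (z - x) <= enorm (z - s)].

Definition intersects_separably (M Q : set Y) (ybar : Y) : Prop :=
  exists alpha : R, 0 < alpha /\ exists delta : R, 0 < delta /\
    forall z, M z -> ~ Q z -> enorm (z - ybar) < delta ->
    forall x, nearest Q z x -> ~ M x ->
    forall z', nearest M x z' -> alpha <= angle (z - x) (z' - x).

Definition super_regular (M : set Y) (ybar : Y) : Prop :=
  forall gamma : R, 0 < gamma -> exists delta : R, 0 < delta /\
    forall z x, M z -> ~ M x -> enorm (z - ybar) < delta -> enorm (x - ybar) < delta ->
    forall z', nearest M x z' -> z' <> z ->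
    pi / 2 - gamma <= angle (z - z') (x - z').

(* Phi : V x Y -> M with V a neighborhood of ybar in M; Phi is given as a
   total function Y -> Y -> Y whose values on V x Y lie in M. *)
Definition faithful_approx (M : set Y) (ybar : Y) (V : set Y) (Phi : Y -> Y -> Y) : Prop :=
  [/\ V `<=` M,
      (exists r : R, 0 < r /\ forall z, M z -> enorm (z - ybar) < r -> V z),
      (forall z y, V z -> M (Phi z y)) &
      (forall eps alpha : R, 0 < eps -> 0 < alpha -> exists delta : R, 0 < delta /\
        forall z y, M z -> ~ M y -> enorm (z - ybar) < delta -> enorm (y - ybar) < delta ->
        forall zh, nearest M y zh -> alpha <= angle (z - y) (zh - y) ->
        enorm (zh - Phi z y) <= eps * enorm (y - z))].

Definition converges_linearly (z : nat -> Y) (zh : Y) : Prop :=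
  exists c rho : R, [/\ 0 < c, c < 1, 0 < rho &
    forall k, enorm (z k - zh) < rho * c ^+ k].

End Euclid.

From mathcomp Require Import all_boot all_order all_algebra.
From mathcomp Require Import all_classical all_reals all_analysis.
From mathcomp Require Import ring lra.
Import numFieldNormedType.Exports.
Import Order.TTheory GRing.Theory Num.Theory.
Local Open Scope ring_scope.
Local Open Scope classical_set_scope.
Set Implicit Arguments. Unset Strict Implicit. Unset Printing Implicit Defensive.

(* Let z be in M near ybar, y a projection of z on Q and p a projection of y
   on M.  Separability keeps the angle of the triangle z y p at y away from 0,
   super-regularity keeps its angle at p above some beta close to pi/2, and
   together they give |p - y| <= (cos alpha + 2 cos beta) |z - y|, while
   faithfulness puts Phi z y within eps |z - y| of p.  So the distances
   |z_k - y_k| decrease geometrically with a ratio c < 1, the steps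
   |z_(k+1) - z_k| are summable, the iterates never leave the neighbourhood
   where the hypotheses apply, and their limit lies in M and in Q. *)

Section Trigonometry.
Variable R : realType.

Lemma cos_lt1 (a : R) : 0 < a <= pi -> cos a < 1.
Proof.
move=> /andP[a_gt0 a_le]; rewrite -cos0 ltr_cos ?in_itv /= ?lexx ?pi_ge0 ?(ltW a_gt0) //.
Qed.

Lemma acos_lt_pihalf (s : R) : 0 < s <= 1 -> acos s < pi / 2.
Proof.
move=> /andP[s_gt0 s_le1].
have s_range : -1 <= s <= 1 by rewrite s_le1 (le_trans _ (ltW s_gt0)) ?lerN10.
have s_itv : s \in `[-1, 1]%R by rewrite in_itv.
have pihalf_itv : pi / 2 \in `[0, pi : R]%R.
  by rewrite in_itv /=; have := pi_ge0 R => ?; rewrite divr_ge0 // ler_pdivrMr //; lra.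
rewrite -ltr_cos // ?cos_pihalf ?acosK //.
by rewrite in_itv /= acos_ge0 ?acos_lepi.
Qed.

Lemma contraction_constants (a : R) : 0 < a <= pi ->
  exists beta eps c : R,
    [/\ 0 <= beta < pi / 2, 0 < eps, 0 < c < 1 & eps + cos a + 2 * cos beta <= c].
Proof.
move=> a_range; have cosa_lt1 := cos_lt1 a_range; have cosa_geN1 := cos_geN1 a.
have s_range : 0 < (1 - cos a) / 8 <= 1.
  by rewrite divr_gt0 ?subr_gt0 //= ler_pdivrMr //; lra.
have s_itv : (1 - cos a) / 8 \in `[-1, 1]%R.
  by case/andP: s_range => *; rewrite in_itv /=; apply/andP; split; lra.
(* With these choices eps + cos a + 2 cos beta = (1 + cos a) / 2 < c. *)
exists (acos ((1 - cos a) / 8)), ((1 - cos a) / 4), ((3 + cos a) / 4).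
rewrite acosK // acos_ge0 ?acos_lt_pihalf -?in_itv // divr_gt0 ?subr_gt0 //.
by split=> //; [apply/andP; split|]; lra.
Qed.

End Trigonometry.

Section EuclideanGeometry.
Variables (R : realType) (n : nat).
Local Notation Y := 'rV[R]_n.
Implicit Types u v w : Y.

Lemma dotpE u v : dotp u v = \sum_i u 0 i * v 0 i.
Proof. by rewrite /dotp !mxE; apply: eq_bigr => i _; rewrite mxE. Qed.

Lemma dotp0r u : dotp u 0 = 0.
Proof. by rewrite dotpE big1 // => i _; rewrite mxE mulr0. Qed.

Lemma dotp_ge0 u : 0 <= dotp u u.
Proof. by rewrite dotpE; apply: sumr_ge0 => i _; rewrite -expr2 sqr_ge0. Qed.

Lemma dotp_eq0 u : dotp u u = 0 -> u = 0.
Proof.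
rewrite dotpE => /eqP; rewrite psumr_eq0 => [/allP u0|i _]; last first.
  by rewrite -expr2 sqr_ge0.
apply/rowP => i; rewrite mxE.
by have := u0 i (mem_index_enum _); rewrite /= mulf_eq0 orbb => /eqP.
Qed.

Lemma dotp_gt0 u : u != 0 -> 0 < dotp u u.
Proof.
by move=> u0; rewrite lt_neqAle dotp_ge0 andbT; apply: contra u0 => /eqP/esym/dotp_eq0->.
Qed.

Lemma dotp_comb (a b : R) u v :
  dotp (a *: u + b *: v) (a *: u + b *: v) =
  a ^+ 2 * dotp u u + 2 * a * b * dotp u v + b ^+ 2 * dotp v v.
Proof.
by rewrite !dotpE !mulr_sumr -!big_split; apply: eq_bigr => i _; rewrite !mxE /=; ring.
Qed.

Lemma dotp_three_points u v w :
  dotp (u - w) (v - w) = dotp (v - w) (v - w) - dotp (u - v) (w - v).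
Proof. by rewrite !dotpE -sumrB; apply: eq_bigr => i _; rewrite !mxE; ring. Qed.

Lemma enorm_ge0 u : 0 <= enorm u.
Proof. exact: sqrtr_ge0. Qed.

Lemma enorm_sq u : enorm u ^+ 2 = dotp u u.
Proof. by rewrite /enorm sqr_sqrtr // dotp_ge0. Qed.

Lemma enorm_gt0 u : u != 0 -> 0 < enorm u.
Proof. by move=> u0; rewrite /enorm sqrtr_gt0 dotp_gt0. Qed.

Lemma enorm0 : enorm (0 : Y) = 0.
Proof. by rewrite /enorm dotp0r sqrtr0. Qed.

Lemma enormB u v : enorm (u - v) = enorm (v - u).
Proof.
by rewrite /enorm !dotpE; congr Num.sqrt; apply: eq_bigr => i _; rewrite !mxE; ring.
Qed.

Lemma dotp_sqr_le u v : dotp u v ^+ 2 <= dotp u u * dotp v v.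
Proof.
have [->|v0] := eqVneq v 0; first by rewrite !dotp0r expr0n /= mulr0.
have := dotp_ge0 (dotp v v *: u + (- dotp u v) *: v); rewrite dotp_comb.
have: 0 < dotp v v := dotp_gt0 v0.
by rewrite -subr_ge0; nra.
Qed.

Lemma dotp_norm_le u v : `|dotp u v| <= enorm u * enorm v.
Proof.
rewrite -sqrtr_sqr /enorm -sqrtrM ?dotp_ge0 //; exact/ler_wsqrtr/dotp_sqr_le.
Qed.

Lemma dotp_le u v : dotp u v <= enorm u * enorm v.
Proof. exact: le_trans (ler_norm _) (dotp_norm_le u v). Qed.

Lemma enormD u v : enorm (u + v) <= enorm u + enorm v.
Proof.
rewrite -[enorm u + enorm v]ger0_norm ?addr_ge0 ?enorm_ge0 // -sqrtr_sqr.
have -> : u + v = 1 *: u + 1 *: v by rewrite !scale1r.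
rewrite {1}/enorm dotp_comb -!enorm_sq; apply: ler_wsqrtr.
have := dotp_le u v; nra.
Qed.

Lemma enorm_triangle u v w : enorm (u - w) <= enorm (u - v) + enorm (v - w).
Proof. by rewrite -[u - w](subrKA v); apply: enormD. Qed.

Lemma enorm_dist_dist u v : `|enorm u - enorm v| <= enorm (u - v).
Proof.
have := enorm_triangle u v 0; have := enorm_triangle v u 0.
by rewrite !subr0 enormB ler_norml => ? ?; apply/andP; split; lra.
Qed.

Lemma enorm_coord_le u i : `|u 0 i| <= enorm u.
Proof.
rewrite -sqrtr_sqr /enorm; apply: ler_wsqrtr; rewrite dotpE (bigD1 i) //= expr2.
by rewrite lerDl; apply: sumr_ge0 => j _; rewrite -expr2 sqr_ge0.
Qed.

Lemma enorm_le_coord_bound u (m : R) :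
  0 <= m -> (forall i, `|u 0 i| <= m) -> enorm u <= n%:R * m.
Proof.
move=> m0 um; rewrite /enorm -[n%:R * m]ger0_norm ?mulr_ge0 // -sqrtr_sqr.
apply: ler_wsqrtr; rewrite dotpE.
apply: (@le_trans _ _ (\sum_(i < n) m ^+ 2)).
  apply: ler_sum => i _; rewrite -expr2 -real_normK ?num_real //.
  by rewrite lerXn2r ?nnegrE ?normr_ge0.
have n_le_sqr : n%:R <= n%:R ^+ 2 :> R.
  by case: (n) => [|k]; rewrite ?expr0n // expr2 -natrM ler_nat leq_pmulr.
rewrite sumr_const card_ord -mulr_natr exprMn; have := sqr_ge0 m; nra.
Qed.

Lemma dotp_le_cos_angle u v (a : R) : u != 0 -> v != 0 -> 0 <= a <= pi ->
  a <= angle u v -> dotp u v <= cos a * (enorm u * enorm v).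
Proof.
move=> u0 v0 a_range a_le.
have uv_gt0 : 0 < enorm u * enorm v by rewrite mulr_gt0 ?enorm_gt0.
set r := dotp u v / (enorm u * enorm v).
have r_range : -1 <= r <= 1.
  rewrite -ler_norml /r normrM normfV [`|_ * _|]gtr0_norm // ler_pdivrMr // mul1r.
  exact: dotp_norm_le.
have r_itv : r \in `[-1, 1]%R by rewrite in_itv.
rewrite -ler_pdivrMr // -/r -(acosK r_itv) leNgt ltr_cos -?leNgt //.
  by rewrite in_itv /= acos_ge0 ?acos_lepi.
Qed.

Lemma dist_le_of_angle_bounds u v w (t s : R) : 0 <= s -> w != v ->
  enorm (v - w) <= enorm (v - u) ->
  dotp (u - v) (w - v) <= t * (enorm (u - v) * enorm (w - v)) ->
  dotp (u - w) (v - w) <= s * (enorm (u - w) * enorm (v - w)) ->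
  enorm (w - v) <= (t + 2 * s) * enorm (u - v).
Proof.
move=> s0 wv; rewrite [enorm (v - w)]enormB [enorm (v - u)]enormB.
set d := enorm (u - v); set B := enorm (w - v); set X := enorm (u - w).
move=> B_le_d angle_v angle_w.
have B_gt0 : 0 < B by rewrite enorm_gt0 // subr_eq0.
have X_le : X <= 2 * d.
  by have := enorm_triangle u v w; rewrite -/X -/d enormB -/B; lra.
have := dotp_three_points u v w; rewrite -enorm_sq enormB => B_sq.
have sX : s * (X * B) <= s * (2 * d * B).
  by apply: ler_wpM2l => //; apply: ler_wpM2r => //; apply: ltW.
rewrite -(ler_pM2l B_gt0); move: B_sq; rewrite expr2 -/B; lra.
Qed.

End EuclideanGeometry.

Section NearestPoints.
Variables (R : realType) (n : nat).
Local Notation Y := 'rV[R]_n.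
Implicit Types u : Y.

Lemma mx_norm_le_enorm u : `|u| <= enorm u.
Proof.
rewrite [X in X <= _]mx_normrE; apply/bigmax_leP; split; first exact: enorm_ge0.
by move=> [a i] _ /=; rewrite (ord1 a); apply: enorm_coord_le.
Qed.

Lemma enorm_lt_of_mx_norm (e : R) u : 0 < e -> `|u| < e / (n%:R + 1) -> enorm u < e.
Proof.
move=> e0; rewrite ltr_pdivlMr ?ltr_wpDl // => u_small.
apply: le_lt_trans u_small; rewrite mulrDr mulr1.
have /le_trans -> // : enorm u <= n%:R * `|u|.
  by apply: enorm_le_coord_bound => // i; rewrite [X in _ <= X]mx_normrE;
    apply: le_trans (le_bigmax _ _ (0, i)).
by rewrite mulrC lerDl.
Qed.

Lemma continuous_enorm_dist y : continuous (fun s : Y => enorm (y - s)).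
Proof.
move=> x; have x_proper : ProperFilter (nbhs x) by exact: nbhs_pfilter.
apply/(@cvgrPdist_lt _ _ _ (nbhs x) x_proper) => e e0.
apply/nbhs_ballP; exists (e / (n%:R + 1)); first by rewrite /= divr_gt0 ?ltr_wpDl.
move=> s; rewrite -ball_normE /= => xs.
apply: le_lt_trans (enorm_dist_dist _ _) _.
have -> : y - x - (y - s) = s - x by rewrite opprB addrC addrA subrK.
by rewrite enormB; apply: enorm_lt_of_mx_norm.
Qed.

Lemma eclosed_closed (S : set Y) : eclosed S -> closed S.
Proof.
move=> S_closed x x_adh; apply: S_closed => e e0.
have [|s [Ss xs]] := x_adh _ (nbhsx_ballx x (e / (n%:R + 1)) _).
  by rewrite divr_gt0 ?ltr_wpDl.
by exists s; split => //; apply: enorm_lt_of_mx_norm; move: xs; rewrite // -ball_normE.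
Qed.

Lemma nearest_exists (S : set Y) y z : eclosed S -> S z -> exists x, nearest S y x.
Proof.
move=> S_closed Sz; set B := enorm (y - z).
set A := S `&` closed_ball_ Num.norm y B.
have Az : A z by split => //; rewrite /closed_ball_ /=; apply: mx_norm_le_enorm.
have A_compact : compact A.
  apply: bounded_closed_compact; last first.
    by apply: closedI; [exact: eclosed_closed | exact: closed_closed_ball_].
  exists (`|y| + B); split; first by rewrite num_real.
  move=> r r_gt s [_ ys]; apply: le_trans (ltW r_gt); rewrite /= in ys *.
  by rewrite -[s](subKr y) (le_trans (ler_normB _ _)) // lerD2l.
have [c /set_mem [Sc _] c_min] := EVT_min_rV (ex_intro _ z Az) A_compact
  (continuous_subspaceT (@continuous_enorm_dist y)).
exists c; split => // s Ss.
have [ys|ys] := leP `|y - s| B; first exact/c_min/mem_set.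
apply: le_trans (c_min z (mem_set Az)) _.
exact: le_trans (ltW ys) (mx_norm_le_enorm _).
Qed.

End NearestPoints.

Section CauchyLimits.
Variables (R : realType) (n : nat).
Local Notation Y := 'rV[R]_n.

Lemma real_cauchy_bound_limit (u a : nat -> R) :
  (forall j k, (j <= k)%N -> `|u k - u j| <= a j) ->
  exists l, forall k, `|u k - l| <= a k.
Proof.
move=> u_cauchy.
have a_ge0 k : 0 <= a k by have := u_cauchy k k (leqnn k); rewrite subrr normr0.
have lb_le_ub j k : u j - a j <= u k + a k.
  have [jk|kj] := leqP j k.
    have := u_cauchy j k jk; rewrite ler_norml => /andP[? _].
    by have := a_ge0 k; lra.
  have := u_cauchy k j (ltnW kj); rewrite ler_norml => /andP[_ ?].
  by have := a_ge0 j; lra.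
set E := range (fun j => u j - a j).
have E_sup : has_sup E.
  split; first by exists (u 0%N - a 0%N), 0%N.
  by exists (u 0%N + a 0%N) => _ [j _ <-]; apply: lb_le_ub.
exists (sup E) => k; rewrite ler_norml.
have : u k - a k <= sup E by apply: sup_upper_bound => //; exists k.
have : sup E <= u k + a k.
  by apply: ge_sup; [case: E_sup | move=> _ [j _ <-]; apply: lb_le_ub].
by move=> ? ?; apply/andP; split; lra.
Qed.

Lemma cauchy_bound_limit (z : nat -> Y) (a : nat -> R) :
  (forall j k, (j <= k)%N -> enorm (z k - z j) <= a j) ->
  exists zh, forall k, enorm (z k - zh) <= n%:R * a k.
Proof.
move=> z_cauchy.
have a_ge0 k : 0 <= a k by have := z_cauchy k k (leqnn k); rewrite subrr enorm0.
have /choice [l l_lim] : forall i : 'I_n, exists l, forall k, `|z k 0 i - l| <= a k.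
  move=> i; apply: real_cauchy_bound_limit => j k jk.
  apply: le_trans (z_cauchy j k jk).
  by have := enorm_coord_le (z k - z j) i; rewrite !mxE.
by exists (\row_i l i) => k; apply: enorm_le_coord_bound => // i; rewrite !mxE.
Qed.

Lemma eclosed_geometric_limit (S : set Y) (x : nat -> Y) l (C c : R) :
  eclosed S -> 0 <= c < 1 -> (forall k, S (x k)) ->
  (forall k, enorm (x k - l) <= C * c ^+ k) -> S l.
Proof.
move=> S_closed /andP[c0 c1] Sx x_lim; apply: S_closed => e e0.
suff [k Ck_lt] : exists k, C * c ^+ k < e.
  by exists (x k); split; rewrite // enormB (le_lt_trans (x_lim k)).
have [C0|C0] := leP C 0; first by exists 0%N; rewrite expr0 mulr1 (le_lt_trans C0).
have eC : 0 < e / C by rewrite divr_gt0.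
have c_norm : `|c| < 1 by rewrite ger0_norm.
have [k /= ck] := filter_ex ((cvgrPdist_lt _ _).1 (cvg_expr c_norm) _ eC).
exists k; move: ck; rewrite sub0r normrN ger0_norm ?exprn_ge0 //.
by rewrite ltr_pdivlMr // mulrC.
Qed.

End CauchyLimits.

Section LinearConvergence.
Variables (R : realType) (n : nat).
Local Notation Y := 'rV[R]_n.
Variables (S Q : set Y) (ybar : Y) (r b c : R) (z y : nat -> Y).
Hypotheses (b_ge0 : 0 <= b) (c_gt0 : 0 < c) (c_lt1 : c < 1).
Hypothesis step : forall k, S (z k) -> enorm (z k - ybar) < r ->
  [/\ S (z k.+1), enorm (z k.+1 - y k) <= c * enorm (z k - y k)
    & enorm (z k.+1 - z k) <= b * enorm (z k - y k)].
Hypothesis y_nearest : forall k, nearest Q (z k) (y k).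
Local Notation d0 := (enorm (z 0%N - y 0%N)).
(* [L * d0] bounds the length b * d0 * (1 + c + c ^+ 2 + ...) of the whole path. *)
Local Notation L := (b / (1 - c)).
Hypotheses (S_z0 : S (z 0%N)) (z0_close : enorm (z 0%N - ybar) + L * d0 < r).

Let ck_ge0 k : 0 <= c ^+ k. Proof. exact/exprn_ge0/ltW. Qed.
Let Ld0_ge0 : 0 <= L * d0.
Proof. by rewrite mulr_ge0 ?enorm_ge0 ?divr_ge0 // subr_ge0 ltW. Qed.

Lemma iterate_invariant k :
  [/\ S (z k), enorm (z k - y k) <= c ^+ k * d0
    & forall j, (j <= k)%N -> enorm (z k - z j) <= L * d0 * (c ^+ j - c ^+ k)].
Proof.
have Lc : L * (1 - c) = b by rewrite divfK // subr_eq0 gt_eqF.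
elim: k => [|k [Sk dk zk]].
  split=> // [|j]; first by rewrite expr0 mul1r.
  by rewrite leqn0 => /eqP ->; rewrite !subrr enorm0 mulr0.
have zk_close : enorm (z k - ybar) < r.
  have := enorm_triangle (z k) (z 0%N) ybar; have := zk 0%N isT.
  have := mulr_ge0 Ld0_ge0 (ck_ge0 k); have := z0_close; rewrite expr0; lra.
have [Sk1 yk_le zk1_le] := step Sk zk_close.
have yk1_le : enorm (z k.+1 - y k.+1) <= enorm (z k.+1 - y k).
  exact: (y_nearest k.+1).2 _ (y_nearest k).1.
split=> // [|j].
  rewrite exprS -mulrA; apply: (le_trans yk1_le); apply: (le_trans yk_le).
  by apply: ler_wpM2l => //; apply: ltW.
rewrite leq_eqVlt => /predU1P[->|/zk jk]; first by rewrite !subrr enorm0 mulr0.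
apply: le_trans (enorm_triangle _ (z k) _) _.
have : enorm (z k.+1 - z k) <= L * (1 - c) * (c ^+ k * d0).
  by rewrite Lc (le_trans zk1_le) //; apply: ler_wpM2l.
rewrite exprS; lra.
Qed.

Lemma iterate_converges : eclosed S -> eclosed Q ->
  exists zh, S zh /\ Q zh /\ converges_linearly z zh.
Proof.
move=> S_closed Q_closed; set C := n%:R * (L * d0).
have c_range : 0 <= c < 1 by rewrite (ltW c_gt0) c_lt1.
have [zh zh_lim] : exists zh, forall k, enorm (z k - zh) <= C * c ^+ k.
  suff [zh zh_lim] : exists zh, forall k, enorm (z k - zh) <= n%:R * (L * d0 * c ^+ k).
    by exists zh => k; rewrite /C -mulrA.
  apply: cauchy_bound_limit => j k jk.
  have [_ _ /(_ j jk) zkj] := iterate_invariant k.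
  by apply: (le_trans zkj); apply: ler_wpM2l => //; rewrite gerBl.
have C_ge0 : 0 <= C by rewrite mulr_ge0.
exists zh; split; [|split].
- apply: (eclosed_geometric_limit S_closed c_range _ zh_lim) => k.
  by case: (iterate_invariant k).
- apply: (@eclosed_geometric_limit _ _ _ y _ (d0 + C) _ Q_closed c_range).
    by move=> k; case: (y_nearest k).
  move=> k; apply: le_trans (enorm_triangle _ (z k) _) _.
  have [_ dk _] := iterate_invariant k; have := zh_lim k.
  by rewrite [enorm (y k - _)]enormB; lra.
- exists c, (C + 1); split => // [|k]; first by rewrite ltr_wpDl.
  apply: le_lt_trans (zh_lim k) _.
  by rewrite mulrDl mul1r ltrDl exprn_gt0.
Qed.

End LinearConvergence.

Section ApproximateAlternatingProjections.
Variables (R : realType) (n : nat).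
Local Notation Y := 'rV[R]_n.
Variables (M Q : set Y) (ybar : Y) (Phi : Y -> Y -> Y) (r alpha beta eps c : R).
Hypotheses (M_closed : eclosed M) (Q_closed : eclosed Q) (Q_ybar : Q ybar).
Hypotheses (alpha_range : 0 < alpha <= pi) (beta_range : 0 <= beta < pi / 2).
Hypotheses (c_range : 0 < c < 1) (c_ge : eps + cos alpha + 2 * cos beta <= c).
Hypothesis separable : forall z, M z -> ~ Q z -> enorm (z - ybar) < r ->
  forall x, nearest Q z x -> ~ M x ->
  forall z', nearest M x z' -> alpha <= angle (z - x) (z' - x).
Hypothesis super_regular : forall z x, M z -> ~ M x ->
  enorm (z - ybar) < r -> enorm (x - ybar) < r ->
  forall z', nearest M x z' -> z' <> z -> beta <= angle (z - z') (x - z').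
Hypothesis faithful : forall z y, M z -> ~ M y ->
  enorm (z - ybar) < r -> enorm (y - ybar) < r ->
  forall zh, nearest M y zh -> alpha <= angle (z - y) (zh - y) ->
  enorm (zh - Phi z y) <= eps * enorm (y - z).
Hypothesis Phi_in_M : forall z y, M z -> enorm (z - ybar) < r -> M (Phi z y).

Let alpha_itv : 0 <= alpha <= pi.
Proof. by case/andP: alpha_range => /ltW -> ->. Qed.

Let beta_itv : 0 <= beta <= pi.
Proof.
case/andP: beta_range => -> /ltW/le_trans; apply.
by rewrite ler_pdivrMr ?ler_peMr ?pi_ge0 ?ler1n.
Qed.

Let cos_beta_ge0 : 0 <= cos beta.
Proof.
case/andP: beta_range => beta_ge0 /ltW beta_le; apply: cos_ge0_pihalf.
by rewrite beta_le (le_trans _ beta_ge0) // oppr_le0 divr_ge0 ?pi_ge0.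
Qed.

Lemma approx_projection_contracts z y : M z -> enorm (z - ybar) < r / 2 ->
  nearest Q z y -> ~ M y -> enorm (Phi z y - y) <= c * enorm (z - y).
Proof.
move=> Mz z_close [Qy y_near] My.
have z_close' : enorm (z - ybar) < r by have := enorm_ge0 (z - ybar); lra.
have y_close : enorm (y - ybar) < r.
  have := enorm_triangle y z ybar; have := y_near ybar Q_ybar.
  by rewrite [enorm (y - z)]enormB; lra.
have zy : z - y != 0 by rewrite subr_eq0; apply: contra_notN My => /eqP <-.
have Qz : ~ Q z.
  move=> Qz; have := y_near z Qz; rewrite subrr enorm0.
  by have := enorm_gt0 zy; rewrite lt_leAnge => /andP[_ /negP].
have [p [Mp p_near]] := nearest_exists y M_closed Mz.
have py : p != y by apply: contra_notN My => /eqP <-.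
have py' : p - y != 0 by rewrite subr_eq0.
have angle_y := separable Mz Qz z_close' (conj Qy y_near) My (conj Mp p_near).
have dot_y := dotp_le_cos_angle zy py' alpha_itv angle_y.
have pz : p <> z.
  move=> pz; move: dot_y; rewrite pz -enorm_sq expr2.
  by have := mulr_gt0 (enorm_gt0 zy) (enorm_gt0 zy); have := cos_lt1 alpha_range; nra.
have zp : z - p != 0 by rewrite subr_eq0 eq_sym; apply/eqP.
have yp : y - p != 0 by rewrite subr_eq0 eq_sym.
have angle_p := super_regular Mz My z_close' y_close (conj Mp p_near) pz.
have dot_p := dotp_le_cos_angle zp yp beta_itv angle_p.
have p_le := dist_le_of_angle_bounds cos_beta_ge0 py (p_near z Mz) dot_y dot_p.
have Phi_le := faithful Mz My z_close' y_close (conj Mp p_near) angle_y.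
apply: le_trans (enorm_triangle _ p _) _.
move: Phi_le; rewrite enormB [enorm (y - z)]enormB.
by have := enorm_ge0 (z - y); have := c_ge; nra.
Qed.

Lemma approx_alternating_step z y zn :
  M z -> enorm (z - ybar) < r / 2 -> nearest Q z y ->
  (~ M y -> zn = Phi z y) -> (M y -> zn = y) ->
  [/\ M zn, enorm (zn - y) <= c * enorm (z - y)
    & enorm (zn - z) <= (1 + c) * enorm (z - y)].
Proof.
move=> Mz z_close y_near zn_Phi zn_y.
suff [Mzn zn_le] : M zn /\ enorm (zn - y) <= c * enorm (z - y).
  by split=> //; have := enorm_triangle zn y z; rewrite [enorm (y - z)]enormB; lra.
have [My|My] := pselect (M y).
  by rewrite zn_y // subrr enorm0 mulr_ge0 ?enorm_ge0 // ltW // (andP c_range).1.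
rewrite zn_Phi //; split; last exact: approx_projection_contracts.
by apply: Phi_in_M => //; have := enorm_ge0 (z - ybar); lra.
Qed.

Lemma approx_alternating_projections_converge : 0 < r ->
  exists delta : R, 0 < delta /\
    forall (z y : nat -> Y),
      M (z 0%N) -> enorm (z 0%N - ybar) < delta ->
      (forall k, nearest Q (z k) (y k)) ->
      (forall k, ~ M (y k) -> z k.+1 = Phi (z k) (y k)) ->
      (forall k, M (y k) -> z k.+1 = y k) ->
      exists zh, M zh /\ Q zh /\ converges_linearly z zh.
Proof.
case/andP: c_range => c_gt0 c_lt1 r_gt0.
have L_ge0 : 0 <= (1 + c) / (1 - c) by rewrite divr_ge0 ?subr_ge0 ?addr_ge0 ?ltW.
exists (r / 2 / (1 + (1 + c) / (1 - c))); split; first by rewrite !divr_gt0 //; lra.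
move=> z y Mz0 z0_close y_near z_Phi z_y.
apply: (@iterate_converges _ _ M Q ybar (r / 2) (1 + c) c z y) => //.
- by rewrite addr_ge0 ?ltW.
- by move=> k Mk zk; apply: approx_alternating_step Mk zk (y_near k) (z_Phi k) (z_y k).
- move: z0_close; rewrite ltr_pdivlMr ?(lt_le_trans ltr01) ?lerDl //.
  have := (y_near 0%N).2 ybar Q_ybar; have := enorm_ge0 (z 0%N - y 0%N); nra.
Qed.

End ApproximateAlternatingProjections.

Theorem mainTheorem3 (R : realType) (n : nat) (M Q : set 'rV[R]_n) (ybar : 'rV[R]_n)
  (V : set 'rV[R]_n) (Phi : 'rV[R]_n -> 'rV[R]_n -> 'rV[R]_n) :
  M !=set0 -> Q !=set0 -> eclosed M -> eclosed Q ->
  M ybar -> Q ybar ->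
  intersects_separably M Q ybar -> super_regular M ybar ->
  faithful_approx M ybar V Phi ->
  exists delta : R, 0 < delta /\
    forall (z y : nat -> 'rV[R]_n),
      M (z 0%N) -> enorm (z 0%N - ybar) < delta ->
      (forall k, nearest Q (z k) (y k)) ->
      (forall k, ~ M (y k) -> z k.+1 = Phi (z k) (y k)) ->
      (forall k, M (y k) -> z k.+1 = y k) ->
      exists zh, M zh /\ Q zh /\ converges_linearly z zh.
Proof.
move=> _ _ M_closed Q_closed _ Q_ybar [alpha [alpha_gt0 [dsep [dsep_gt0 sep]]]]
  super_reg [_ [rV [rV_gt0 V_near]] Phi_V faithful].
pose a := Num.min alpha 1.
have [a_le_alpha a_range] : a <= alpha /\ 0 < a <= pi.
  rewrite !ge_min lexx lt_min alpha_gt0 ltr01 /=; split=> //; apply/orP; right.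
  by have := pi_ge2 R; lra.
have [beta [eps [c [beta_range eps_gt0 c_range c_ge]]]] := contraction_constants a_range.
have [|dsr [dsr_gt0 sr]] := super_reg (pi / 2 - beta).
  by rewrite subr_gt0; case/andP: beta_range.
have [dfa [dfa_gt0 fa]] := faithful eps a eps_gt0 (andP a_range).1.
pose r := Num.min (Num.min dsep dsr) (Num.min dfa rV).
have [r_sep r_sr r_fa r_V] : [/\ r <= dsep, r <= dsr, r <= dfa & r <= rV].
  by rewrite !ge_min !lexx !orbT.
apply: (@approx_alternating_projections_converge R n M Q ybar Phi r a beta eps c) => //.
- move=> z' Mz' Qz' /lt_le_trans/(_ r_sep) z'_close x x_near Mx p p_near.
  exact: le_trans a_le_alpha (sep z' Mz' Qz' z'_close x x_near Mx p p_near).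
- move=> z' x Mz' Mx /lt_le_trans/(_ r_sr) z'_close /lt_le_trans/(_ r_sr) x_close.
  by rewrite -[beta](subKr (pi / 2)); apply: sr.
- by move=> ? ? ? ? /lt_le_trans/(_ r_fa) ? /lt_le_trans/(_ r_fa) ?; apply: fa.
- by move=> z' y' Mz' /lt_le_trans/(_ r_V) z'_close; apply/Phi_V/V_near.
- by rewrite !lt_min dsep_gt0 dsr_gt0 dfa_gt0 rV_gt0.
Qed.
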